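(* Let $M$ be a complete oriented Riemannian manifold and $G$ a locally compact unimodular group acting properly, cocompactly and isometrically on $M$. Let $T:M\to M$ be a $G$-equivariant isometry, let $g\in G$ have centraliser $Z$, and suppose the conjugacy class of $g$ in $G$ is closed. Then the quotient $M^{gT}/Z$ of the fixed-point set $M^{gT}=\{m\in M: gTm=m\}$ by the action of $Z$ is compact. *)

From HB Require Import structures.
From mathcomp Require Import all_boot all_order all_algebra.
From mathcomp Require Import all_classical all_reals all_analysis.
Set Implicit Arguments. Unset Strict Implicit. Unset Printing Implicit Defensive.
Import Order.TTheory GRing.Theory Num.Theory.
Local Open Scope classical_set_scope.
Local Open Scope ring_scope.

Definition topological_group (G : topologicalType)
  (mul : G -> G -> G) (inv : G -> G) (e : G) : Prop :=
  [/\ (forall x y z, mul x (mul y z) = mul (mul x y) z),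
      (forall x, mul e x = x /\ mul x e = x),
      (forall x, mul (inv x) x = e /\ mul x (inv x) = e),
      continuous (fun p : G * G => mul p.1 p.2) &
      continuous inv].

Definition locally_compact_space (X : topologicalType) : Prop :=
  hausdorff_space X /\ locally_compact [set: X].

Definition borel_sets (X : topologicalType) : set (set X) :=
  smallest (sigma_algebra setT) (@open X).

Definition nonzero_radon_measure {R : realType} (X : topologicalType)
  (mu : set X -> \bar R) : Prop :=
  mu set0 = 0%E /\
      (forall A, borel_sets A -> (0 <= mu A)%E) /\
      (forall F : (set X)^nat, (forall n, borel_sets (F n)) ->
          trivIset setT F ->
          (fun n => \sum_(0 <= i < n) mu (F i))%E @ \oo --> mu (\bigcup_n F n)) /\
      (forall K, compact K -> (mu K < +oo)%E) /\
      (forall A, borel_sets A ->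
          mu A = ereal_inf [set mu U | U in [set U | open U /\ A `<=` U]]) /\
      (forall U, open U ->
          mu U = ereal_sup [set mu K | K in [set K | compact K /\ K `<=` U]]) /\
      (exists A, borel_sets A /\ mu A != 0%E).

(* unimodular: a (left) Haar measure which is also right invariant,
   i.e. there is a nonzero Radon measure invariant under left and right
   translations *)
Definition unimodular {R : realType} (G : topologicalType)
  (mul : G -> G -> G) : Prop :=
  exists mu : set G -> \bar R, nonzero_radon_measure mu /\
    forall g A, borel_sets A ->
      mu ((mul g) @` A) = mu A /\ mu ((fun x => mul x g) @` A) = mu A.

Definition continuous_action (G M : topologicalType)
  (mul : G -> G -> G) (e : G) (act : G -> M -> M) : Prop :=
  [/\ (forall m, act e m = m),
      (forall g h m, act (mul g h) m = act g (act h m)) &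
      continuous (fun p : G * M => act p.1 p.2)].

Definition proper_action (G M : topologicalType) (act : G -> M -> M) : Prop :=
  forall C : set (M * M), compact C ->
    compact ((fun p : G * M => (act p.1 p.2, p.2)) @^-1` C).

(* A / H is compact (for the quotient topology of the subspace A of M),
   where A is stable under H; unfolded: every cover of A by open sets whose
   traces on A are H-saturated has a finite subcover. *)
Definition quotient_compact (G M : topologicalType) (act : G -> M -> M)
  (H : set G) (A : set M) : Prop :=
  forall (I : Type) (U : I -> set M),
    (forall i, open (U i)) ->
    (forall i h x, H h -> A x -> U i x -> U i (act h x)) ->
    A `<=` \bigcup_i U i ->
    exists2 J : set I, finite_set J & A `<=` \bigcup_(i in J) U i.

Definition cocompact_action (G M : topologicalType) (act : G -> M -> M) :=
  quotient_compact act setT setT.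

Definition complete_metric {R : realType} (M : metricType R) : Prop :=
  forall F : set_system M, ProperFilter F -> cauchy F -> exists l : M, F --> l.

Definition centraliser (G : Type) (mul : G -> G -> G) (g : G) : set G :=
  [set z | mul z g = mul g z].

Definition conj_class (G : Type) (mul : G -> G -> G) (inv : G -> G) (g : G)
  : set G := [set mul (mul h g) (inv h) | h in setT].

Definition fixed_set (G M : Type) (act : G -> M -> M) (g : G) (T : M -> M)
  : set M := [set m | act g (T m) = m].

From HB Require Import structures.
From mathcomp Require Import all_boot all_order all_algebra.
From mathcomp Require Import all_classical all_reals all_analysis.
Import Order.TTheory GRing.Theory Num.Theory.
Local Open Scope classical_set_scope.
Local Open Scope ring_scope.
Set Implicit Arguments. Unset Strict Implicit.

(* Cocompactness gives a compact K whose G-translates cover M.  If x = h k is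
   fixed by gT, with k in K, then h^-1 g h maps T k to k: it lies in the
   compact set of elements moving T K into K, and in the closed conjugacy class
   of g.  As G is sigma-compact (M is second countable and the action proper),
   Baire's theorem makes the orbit map G/Z -> class of g open, so the h for
   which h^-1 g h stays in a compact set lie in Z W for some compact W.  Every
   fixed point is therefore a Z-translate of a fixed point in the compact set
   W K. *)

Lemma compact_finite_subcover (X : topologicalType) (A : set X) (I : Type)
    (U : I -> set X) :
  compact A -> (forall i, open (U i)) -> A `<=` \bigcup_i U i ->
  exists2 J : set I, finite_set J & A `<=` \bigcup_(i in J) U i.
Proof.
move=> /compact_near_coveringP cA oU AU.
pose F := filter_from finite_set
  (fun J0 : set I => [set J | J0 `<=` J /\ finite_set J]).
have FF : Filter F.
  apply: filter_from_filter; first by exists set0.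
  move=> J0 J1 fJ0 fJ1; exists (J0 `|` J1); first by rewrite /= finite_setU.
  by move=> J [J01 fJ]; split; split=> // j Jj; apply: J01; [left|right].
have [|J0 fJ0 AJ] := cA _ F (fun J x => (\bigcup_(i in J) U i) x) FF.
  move=> x /AU[i _ Uix]; exists (U i, [set J | [set i] `<=` J /\ finite_set J]).
    split=> /=; first exact: open_nbhs_nbhs.
    by exists [set i]; first exact: finite_set1.
  by case=> y J [Uy [iJ _]]; exists i => //; exact: iJ.
by exists J0 => //; apply: AJ; split.
Qed.

Lemma bigcup_compact (X : topologicalType) (I : choiceType) (J : set I)
    (F : I -> set X) :
  finite_set J -> (forall i, J i -> compact (F i)) ->
  compact (\bigcup_(i in J) F i).
Proof.
move=> fJ cF; rewrite -bigsetU_fset_set// big_seq.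
by apply: bigsetU_compact => i; rewrite in_fset_set// => /set_mem; exact: cF.
Qed.

Lemma isometry_continuous (R : realType) (M : metricType R) (T : M -> M) :
  (forall x y, mdist (T x) (T y) = mdist x y) -> continuous T.
Proof.
move=> isoT x A /nbhs_ballP[r r0 rA]; apply/nbhs_ballP; exists r => // y.
by rewrite !ballEmdist /= => xy; apply: rA; rewrite ballEmdist /= isoT.
Qed.

Lemma closed_eqfun (X Y : topologicalType) (f h : X -> Y) :
  hausdorff_space Y -> continuous f -> continuous h -> closed [set x | f x = h x].
Proof.
move=> hY cf ch x clx; apply: hY => A B nA nB.
have nfA : nbhs x (f @^-1` A) by exact: cf.
have nhB : nbhs x (h @^-1` B) by exact: ch.
have [y [/= fhy [Afy Bhy]]] := clx _ (filterI nfA nhB).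
by exists (f y); split=> //; rewrite fhy.
Qed.

Lemma compact_nested_bigcap (X : topologicalType) (Q : nat -> set X) :
  compact (Q 0%N) -> (forall n, closed (Q n)) -> (forall n, Q n.+1 `<=` Q n) ->
  (forall n, Q n !=set0) -> \bigcap_n Q n !=set0.
Proof.
move=> cQ0 clQ QS Q0.
have Qle : {homo Q : m n / (m <= n)%N >-> n `<=` m}.
  apply: (@homo_leq _ _ (fun A B => B `<=` A)) => // [A|B A C AB BC].
  - exact: subset_refl.
  - exact: subset_trans BC AB.
pose F := filter_from [set: nat] Q.
have FF : ProperFilter F.
  apply: filter_from_proper => [|n _]; last exact: Q0.
  apply: filter_from_filter; first by exists 0%N.
  move=> m n _ _; exists (maxn m n) => //.
  by move=> x Qx; split; apply: (Qle _ _ _ x Qx); rewrite ?leq_maxl ?leq_maxr.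
have [x [_ clx]] := cQ0 F FF (ex_intro2 _ _ 0%N I (@subset_refl _ _)).
exists x => n _; apply: (clQ n) => B nB.
by apply: clx nB; exists n.
Qed.

Definition sigma_compact (X : topologicalType) :=
  exists2 W : nat -> set X, (forall n, compact (W n)) & [set: X] `<=` \bigcup_n W n.

Section LocallyCompactHausdorff.
Variable X : topologicalType.
Hypotheses (hX : hausdorff_space X) (lX : locally_compact [set: X]).

Lemma compact_nbhs_subset (x : X) (U : set X) :
  nbhs x U -> exists N, [/\ nbhs x N, compact N & N `<=` U].
Proof.
move=> nU; have [V nV [cV clV]] := @lX x I.
rewrite withinET in nV.
have [D nD DU] := compact_regular hX cV nV nU.
exists (V `&` closure D); split.
- by apply: filterI => //; apply: filterS nD; exact: subset_closure.
- by apply: compact_closedI => //; exact: closed_closure.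
- by move=> y [_ /DU].
Qed.

Lemma open_precompact_subset (x : X) (U : set X) :
  nbhs x U -> exists V, [/\ open V, V x, compact (closure V) & closure V `<=` U].
Proof.
move=> /compact_nbhs_subset[N [nN cN NU]].
have clN : closure N° `<=` N.
  move=> y /(closureS (@interior_subset _ N)); exact: compact_closed.
exists N°; split; [exact: open_interior|exact: nbhs_singleton (nbhs_interior nN)| |].
- exact: subclosed_compact (@closed_closure _ _) cN clN.
- exact: subset_trans clN NU.
Qed.

Lemma baire (J : countType) (Cl : set X) (C : J -> set X) :
  closed Cl -> Cl !=set0 -> (forall i, closed (C i)) -> Cl `<=` \bigcup_i C i ->
  exists i (Q : set X), [/\ open Q, Q `&` Cl !=set0 & Q `&` Cl `<=` C i].
Proof.
move=> clCl [c0 Clc0] clC ClC; apply: contrapT => noint.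
pose D n := oapp C set0 (choice.unpickle n).
have clD n : closed (D n).
  by rewrite /D; case: choice.unpickle => [i|]; [exact: clC|exact: closed0].
have avoid n Q : open Q -> Q `&` Cl !=set0 -> exists2 x, (Q `&` Cl) x & ~ D n x.
  move=> oQ [x QClx]; rewrite /D; case: choice.unpickle => [i|]; last by exists x.
  apply: contrapT => QClC; apply: noint; exists i, Q; split=> //; first by exists x.
  by move=> y QCly; apply: contrapT => nCy; apply: QClC; exists y.
pose good Q := [/\ open Q, Q `&` Cl !=set0 & compact (closure Q)].
have shrink (p : nat * set X) :
    exists Q, good p.2 -> good Q /\ closure Q `<=` p.2 `\` D p.1.
  case: (pselect (good p.2)) => [[oQ QCl _]|]; last by exists set0.
  have [x [Qx Clx] nDx] := avoid p.1 p.2 oQ QCl.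
  have nQD : nbhs x (p.2 `\` D p.1).
    apply: open_nbhs_nbhs; split=> //.
    by rewrite setDE; exact: openI (closed_openC _).
  have [V [oV Vx cV VQD]] := open_precompact_subset nQD.
  by exists V => _; split=> //; split=> //; exists x.
have [V0 [oV0 V0c0 cV0 _]] := open_precompact_subset (@filterT _ (nbhs c0) _).
move/choice: shrink => [next nextP].
pose s := fix s n := if n is m.+1 then next (m, s m) else V0.
have sgood n : good (s n).
  by elim: n => [|n IH]; [split=> //; exists c0|exact: (nextP (n, s n) IH).1].
have sS n : closure (s n.+1) `<=` s n `\` D n := (nextP (n, s n) (sgood n)).2.
have [p sp] : \bigcap_n (closure (s n) `&` Cl) !=set0.
  apply: compact_nested_bigcap.
  - by case: (sgood 0%N) => _ _ cs0; exact: compact_closedI.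
  - by move=> n; apply: closedI => //; exact: closed_closure.
  - by move=> n x [/sS[sx _] Clx]; split=> //; exact: subset_closure.
  - move=> n; case: (sgood n) => _ [x [sx Clx]] _.
    by exists x; split=> //; exact: subset_closure.
have [i _ Cip] := ClC p (sp 0%N I).2.
have [_] := sS (choice.pickle i) p (sp _ I).1.
by rewrite /D choice.pickleK.
Qed.

Lemma second_countable_sigma_compact : @second_countable X -> sigma_compact X.
Proof.
case=> B /pcard_surjP[f fB] [_ Bx].
pose W n :=
  if pselect (compact (closure (f n))) is left _ then closure (f n) else set0.
exists W => [n|x _]; first by rewrite /W; case: pselect => // _; exact: compact0.
have [N [nN cN _]] := compact_nbhs_subset (@filterT _ (nbhs x) _).
have [A [BA Ax] AN] := Bx x N nN.
have [n _ fnA] := fB A BA.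
have cA : compact (closure A).
  apply: (subclosed_compact (@closed_closure _ _) cN).
  by move=> y /(closureS AN); exact: (compact_closed hX cN).
exists n => //; rewrite /W fnA; case: pselect => [_|/(_ cA)[]]; exact: subset_closure.
Qed.

End LocallyCompactHausdorff.

Section TopologicalGroup.
Variables (G : topologicalType) (mul : G -> G -> G) (inv : G -> G) (e : G).
Hypothesis hG : topological_group mul inv e.
Local Notation "x * y" := (mul x y).
Local Notation "x ^-1" := (inv x).

Lemma mulgA x y z : x * (y * z) = x * y * z. Proof. by case: hG. Qed.
Lemma mul1g x : e * x = x. Proof. by case: hG => _ /(_ x)[]. Qed.
Lemma mulg1 x : x * e = x. Proof. by case: hG => _ /(_ x)[]. Qed.
Lemma mulVg x : x^-1 * x = e. Proof. by case: hG => _ _ /(_ x)[]. Qed.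
Lemma mulgV x : x * x^-1 = e. Proof. by case: hG => _ _ /(_ x)[]. Qed.
Lemma mulKg x y : x^-1 * (x * y) = y. Proof. by rewrite mulgA mulVg mul1g. Qed.
Lemma mulgK x y : y * x * x^-1 = y. Proof. by rewrite -mulgA mulgV mulg1. Qed.
Lemma mulgKV x y : y * x^-1 * x = y. Proof. by rewrite -mulgA mulVg mulg1. Qed.

Lemma invg_eq x y : x * y = e -> y = x^-1.
Proof. by move=> xy; rewrite -[y](mulKg x) xy mulg1. Qed.
Lemma invgK x : x^-1^-1 = x.
Proof. by apply/esym/invg_eq; rewrite mulVg. Qed.
Lemma invMg x y : (x * y)^-1 = y^-1 * x^-1.
Proof. by apply/esym/invg_eq; rewrite mulgA mulgK mulgV. Qed.

Lemma continuous_mulg (Y : topologicalType) (f h : Y -> G) :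
  continuous f -> continuous h -> continuous (fun y => f y * h y).
Proof.
case: hG => _ _ _ cmul _ cf ch y.
exact: (continuous2_cvg _ (cmul (f y, h y)) (cf y) (ch y)).
Qed.

Lemma continuous_invg (Y : topologicalType) (f : Y -> G) :
  continuous f -> continuous (fun y => (f y)^-1).
Proof.
by case: hG => _ _ _ _ cinv cf y; exact: continuous_comp (cf y) (cinv _).
Qed.

Lemma continuous_mulgr a : continuous (fun x => x * a).
Proof.
exact: continuous_mulg (fun x => @cvg_id _ (nbhs x)) (@cst_continuous G G a).
Qed.

Definition conjg (x h : G) := h^-1 * x * h.
Local Notation "x ^ h" := (conjg x h).

Lemma conjg1 x : x ^ e = x.
Proof. by rewrite /conjg mulg1 -[e^-1]mulg1 mulVg mul1g. Qed.
Lemma conjgM x a b : x ^ (a * b) = (x ^ a) ^ b.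
Proof. by rewrite /conjg invMg !mulgA. Qed.
Lemma conjgK x h : (x ^ h) ^ h^-1 = x.
Proof. by rewrite -conjgM mulgV conjg1. Qed.

Lemma continuous_conjg (Y : topologicalType) (f h : Y -> G) :
  continuous f -> continuous h -> continuous (fun y => f y ^ h y).
Proof.
move=> cf ch; apply: continuous_mulg => //.
exact: continuous_mulg (continuous_invg ch) cf.
Qed.

Lemma continuous_conjgr a : continuous (fun x => x ^ a).
Proof.
exact: continuous_conjg (fun x => @cvg_id _ (nbhs x)) (@cst_continuous G G a).
Qed.

Lemma conj_classE g : conj_class mul inv g = [set g ^ h | h in [set: G]].
Proof.
by apply/seteqP; split=> _ [h _ <-]; exists h^-1 => //; rewrite /conjg invgK.
Qed.

Lemma conj_class_conjg g y h :
  conj_class mul inv g y -> conj_class mul inv g (y ^ h).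
Proof.
by rewrite !conj_classE => -[k _ <-]; exists (k * h) => //; rewrite conjgM.
Qed.

Lemma centraliserE g z : centraliser mul g z <-> g ^ z = g.
Proof.
rewrite /centraliser /conjg /=; split=> [zg|gz].
  by rewrite -mulgA -zg mulKg.
by rewrite -{1}gz !mulgA mulgV mul1g.
Qed.

Lemma centraliserV g z : centraliser mul g z -> centraliser mul g z^-1.
Proof. by move=> /centraliserE gz; apply/centraliserE; rewrite -{1}gz conjgK. Qed.

Hypothesis lcG : locally_compact_space G.

Lemma nbhs1_compact_mulV (V : set G) : nbhs e V ->
  exists V1, [/\ nbhs e V1, compact V1 & forall a b, V1 a -> V1 b -> V (a * b^-1)].
Proof.
move=> nV; have [hGs lG] := lcG.
have cdiv : continuous (fun p : G * G => p.1 * p.2^-1).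
  apply: continuous_mulg => [p|]; first exact: cvg_fst.
  by apply: continuous_invg => p; exact: cvg_snd.
have [[A B] /= [nA nB] ABV] :
    nbhs (e, e) ((fun p : G * G => p.1 * p.2^-1) @^-1` V).
  by apply: cdiv; rewrite /= mulgV.
have [V1 [nV1 cV1 V1AB]] := compact_nbhs_subset hGs lG (filterI nA nB).
exists V1; split=> // a b /V1AB[Aa _] /V1AB[_ Bb].
exact: (ABV (a, b)).
Qed.

Lemma sigma_compact_translates (V : set G) : sigma_compact G -> nbhs e V ->
  exists c : nat * nat -> G, forall x, exists p, V (x * (c p)^-1).
Proof.
move=> [W cW WG] nV.
have cover n :
    exists s : seq G, forall x, W n x -> exists2 h, h \in s & V° (x * h^-1).
  have [||J fJ WJ] := compact_finite_subcover (cW n)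
    (U := fun h => [set x | V° (x * h^-1)]).
  - move=> h; apply: open_comp (@open_interior _ V) => x _.
    exact: continuous_mulgr.
  - move=> x _; exists x => //=; rewrite mulgV.
    exact: nbhs_singleton (nbhs_interior nV).
  have [s Js] := (finite_seqP J).1 fJ.
  by exists s => x /WJ[h]; rewrite Js; exists h.
have [s sP] := choice cover.
exists (fun p => nth e (s p.1) p.2) => x.
have [n _ Wnx] := WG x I.
have [h /(nthP e)[i _ <-] Vh] := sP n x Wnx.
by exists (n, i); exact: interior_subset.
Qed.

Lemma conjg_nbhs_image g (V : set G) :
  sigma_compact G -> closed (conj_class mul inv g) -> nbhs e V ->
  exists Q, [/\ open Q, Q g & Q `&` conj_class mul inv g `<=` [set g ^ v | v in V]].
Proof.
move=> scG clg nV; have [hGs lG] := lcG.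
have [V1 [nV1 cV1 V1V]] := nbhs1_compact_mulV nV.
have [c Gc] := sigma_compact_translates scG nV1.
pose C p := [set g ^ (v * c p) | v in V1].
have clC p : closed (C p).
  apply: compact_closed => //; apply: continuous_compact cV1.
  apply/continuous_subspaceT/continuous_conjg; first exact: cst_continuous.
  exact: continuous_mulgr.
have gcl : conj_class mul inv g g.
  by rewrite conj_classE; exists e => //; rewrite conjg1.
have classC : conj_class mul inv g `<=` \bigcup_p C p.
  rewrite conj_classE => _ [x _ <-]; have [p V1x] := Gc x.
  by exists p => //; exists (x * (c p)^-1); rewrite ?mulgKV.
(* Baire: some compact piece g ^ (V1 c p) has interior in the class. *)
have [p [Q0 [oQ0 [y0 [Q0y0 cly0]] Q0C]]] :=
  baire hGs lG clg (ex_intro _ g gcl) clC classC.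
have [v0 V1v0 y0E] := Q0C y0 (conj Q0y0 cly0).
pose a := v0 * c p.
exists [set x | Q0 (x ^ a)]; split=> /=.
- by apply: open_comp oQ0 => x _; exact: continuous_conjgr.
- by rewrite y0E.
- move=> x [Q0xa clx].
  have [v V1v vE] := Q0C _ (conj Q0xa (conj_class_conjg a clx)).
  exists (v * v0^-1); first exact: V1V.
  by rewrite -[x](conjgK x a) -vE -conjgM /a invMg !mulgA mulgK.
Qed.

Lemma conjg_preimage_compact g (C : set G) :
  sigma_compact G -> closed (conj_class mul inv g) ->
  compact C -> C `<=` conj_class mul inv g ->
  exists2 W, compact W & forall h, C (g ^ h) ->
    exists2 z, centraliser mul g z & exists2 w, W w & h = z * w.
Proof.
move=> scG clg cC Ccl; have [hGs lG] := lcG.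
have [V0 [nV0 cV0 _]] := compact_nbhs_subset hGs lG (@filterT _ (nbhs e) _).
have [Q [oQ Qg QV]] := conjg_nbhs_image scG clg nV0.
have /choice[b bP] : forall c, exists b, C c -> c = g ^ b.
  move=> c; case: (pselect (C c)) => [/Ccl|nCc]; last by exists e => /nCc.
  by rewrite conj_classE => -[b _ <-]; exists b.
have [|c Cc|J fJ CJ] :=
    compact_finite_subcover cC (U := fun c => [set x | Q (x ^ (b c)^-1)]).
- by move=> c; apply: open_comp oQ => x _; exact: continuous_conjgr.
- by exists c => //=; rewrite {1}(bP c Cc) conjgK.
exists (\bigcup_(c in J) [set v * b c | v in V0]).
  apply: bigcup_compact fJ _ => c _; apply: continuous_compact cV0.
  exact/continuous_subspaceT/continuous_mulgr.
move=> h Ch; have [c Jc /= Qc] := CJ _ Ch.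
have [v V0v vE] := QV _ (conj Qc (conj_class_conjg _ (Ccl _ Ch))).
exists (h * (b c)^-1 * v^-1).
  by apply/centraliserE; rewrite !conjgM -vE conjgK.
exists (v * b c); first by exists c => //; exists v.
by rewrite mulgA !mulgKV.
Qed.

End TopologicalGroup.

Section Action.
Variables (G M : topologicalType) (act : G -> M -> M).

Definition transporter (A B : set M) : set G :=
  [set h | exists2 a, A a & B (act h a)].

Lemma proper_transporter_compact (A B : set M) :
  proper_action act -> compact A -> compact B -> compact (transporter A B).
Proof.
move=> pa cA cB.
have -> : transporter A B =
    fst @` ((fun p : G * M => (act p.1 p.2, p.2)) @^-1` (B `*` A)).
  apply/seteqP; split=> [h [a Aa Bha]|_ [[h a] [/= Bha Aa] <-]]; last by exists a.
  by exists (h, a).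
apply: continuous_compact; last exact/pa/compact_setX.
by apply: continuous_subspaceT => p; exact: cvg_fst.
Qed.

Lemma proper_sigma_compact (m0 : M) :
  proper_action act -> sigma_compact M -> sigma_compact G.
Proof.
move=> pa [W cW MW]; exists (fun n => transporter [set m0] (W n)).
  by move=> n; apply: proper_transporter_compact => //; exact: compact_set1.
by move=> h _; have [n _ Wn] := MW (act h m0) I; exists n => //; exists m0.
Qed.

Lemma quotient_compact_of_compact (H : set G) (A B : set M) :
  compact B -> B `<=` A ->
  (forall x, A x -> exists2 h, H h & exists2 b, B b & x = act h b) ->
  quotient_compact act H A.
Proof.
move=> cB BA AHB I U oU HU AU.
have [J fJ BJ] := compact_finite_subcover cB oU (fun b Bb => AU b (BA b Bb)).
exists J => // x /AHB[h Hh [b Bb ->]].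
have [i Ji Uib] := BJ b Bb.
by exists i => //; exact: HU (BA b Bb) Uib.
Qed.

Variables (mul : G -> G -> G) (inv : G -> G) (e : G).
Hypotheses (hG : topological_group mul inv e) (hact : continuous_action mul e act).

Lemma act_continuous h : continuous (act h).
Proof.
case: hact => _ _ cact m.
exact: (continuous2_cvg _ (cact (h, m)) (cvg_cst h) (@cvg_id _ (nbhs m))).
Qed.

Lemma actM g h m : act (mul g h) m = act g (act h m).
Proof. by case: hact. Qed.

Lemma actK h m : act (inv h) (act h m) = m.
Proof. by case: hact => act1 _ _; rewrite -actM (mulVg hG) act1. Qed.

Lemma cocompact_compact_cover :
  hausdorff_space M -> locally_compact [set: M] -> cocompact_action act ->
  exists2 K, compact K & forall m, exists h k, K k /\ m = act h k.
Proof.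
move=> hM lM cca.
have /choice[N NP] : forall m : M, exists N, nbhs m N /\ compact N.
  move=> m; have [N [nN cN _]] := compact_nbhs_subset hM lM (@filterT _ (nbhs m) _).
  by exists N.
have [|||J fJ MJ] := cca M (fun m => \bigcup_h act h @^-1` (N m)°).
- move=> m; apply: bigcup_open => h _.
  by apply: open_comp (@open_interior _ _) => x _; exact: act_continuous.
- move=> m h x _ _ [h0 _ /= Nx]; exists (mul h0 (inv h)) => //=.
  by rewrite actM actK.
- move=> m _; exists m => //; exists e => //=.
  by case: hact => -> _ _; exact: nbhs_singleton (nbhs_interior (NP m).1).
exists (\bigcup_(m in J) N m).
  by apply: bigcup_compact fJ _ => m _; case: (NP m).
move=> m; have [i Ji [h _ Nm]] := MJ m I.
exists (inv h), (act h m); split; first by exists i => //; exact: interior_subset.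
by rewrite actK.
Qed.

Variables (T : M -> M) (g : G).
Hypothesis equivT : forall h m, T (act h m) = act h (T m).

Lemma closed_fixed_set :
  hausdorff_space M -> continuous T -> closed (fixed_set act g T).
Proof.
move=> hM cT; apply: (@closed_eqfun _ _ (act g \o T) id) => // m.
  exact: continuous_comp (cT m) (@act_continuous g (T m)).
exact: cvg_id.
Qed.

Lemma fixed_set_centraliser z x :
  centraliser mul g z -> fixed_set act g T x -> fixed_set act g T (act z x).
Proof. by rewrite /fixed_set /= => zg gTx; rewrite equivT -actM -zg actM gTx. Qed.

Lemma fixed_set_conjg h k :
  fixed_set act g T (act h k) -> act (conjg mul inv g h) (T k) = k.
Proof. by move=> gTx; rewrite /conjg !actM -equivT gTx actK. Qed.

End Action.


Theorem lemma3p16 (R : realType) (M : metricType R) (G : topologicalType)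
  (mul : G -> G -> G) (inv : G -> G) (e : G) (act : G -> M -> M)
  (T : M -> M) (g : G) :
  (* M: complete Riemannian manifold (topological/metric shadow) *)
  complete_metric M ->
  locally_compact_space M ->
  @second_countable M ->
  (* G: locally compact unimodular group *)
  topological_group mul inv e ->
  locally_compact_space G ->
  @unimodular R G mul ->
  (* proper, cocompact, isometric action *)
  continuous_action mul e act ->
  proper_action act ->
  cocompact_action act ->
  (forall h x y, mdist (act h x) (act h y) = mdist x y) ->
  (* T : G-equivariant isometry *)
  bijective T ->
  (forall x y, mdist (T x) (T y) = mdist x y) ->
  (forall h m, T (act h m) = act h (T m)) ->
  (* closed conjugacy class *)
  closed (conj_class mul inv g) ->
  quotient_compact act (centraliser mul g) (fixed_set act g T).
Proof.
move=> _ [hM lM] scM hG lcG _ hact pa cca _ _ isoT equivT clg.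
have cT := isometry_continuous isoT.
have [[m0 _]|M0] := pselect (exists m : M, True); last first.
  move=> I U _ _ _; exists set0 => [|x _]; first exact: finite_set0.
  by case: M0; exists x.
have scG := proper_sigma_compact m0 pa (second_countable_sigma_compact hM lM scM).
have [K cK MK] := cocompact_compact_cover hG hact hM lM cca.
pose S := transporter act (T @` K) K `&` conj_class mul inv g.
have cS : compact S.
  apply: compact_closedI _ clg; apply: (proper_transporter_compact pa _ cK).
  exact: continuous_compact (continuous_subspaceT cT) cK.
have [W cW SZW] := conjg_preimage_compact hG lcG scG clg cS (@subIsetr _ _ _).
apply: (@quotient_compact_of_compact _ _ _ _ _
  ([set act p.1 p.2 | p in W `*` K] `&` fixed_set act g T)) => [||x gTx].
- apply: compact_closedI _ (closed_fixed_set hact hM cT).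
  apply: continuous_compact (compact_setX cW cK); apply: continuous_subspaceT.
  by case: hact.
- exact: subIsetr.
have [h [k [Kk xE]]] := MK x.
have [|z zg [w Ww hE]] := SZW h.
  split; last by rewrite (conj_classE hG); exists h.
  by exists (T k); [exists k | rewrite (fixed_set_conjg hG hact equivT) // -xE].
exists z => //; exists (act w k); last by rewrite xE hE (actM hact).
split; first by exists (w, k).
have -> : act w k = act (inv z) x by rewrite xE hE (actM hact) (actK hG hact).
exact: (fixed_set_centraliser hact equivT (centraliserV hG zg) gTx).
Qed.
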